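(* Let $e_k(x)=x^k$ for $k\in\{0,1,2\}$, $x\in[0,1]$, and let $A:C([0,1])\to C([0,1])$ be a weakly nonlinear and monotone operator with $A(1)(x)>0$ for all $x\in[0,1]$. Let $T_n:C([0,1])\to C([0,1])$ ($n\ge1$) be weakly nonlinear and monotone operators. Put $M=\big(\inf_{x\in[0,1]}A(1)(x)\big)^{-1}$ and $$\mu_n=\|T_n(e_2)A(1)-2T_n(-e_1)A(-e_1)+T_n(1)A(e_2)\|^{1/2}.$$ Then for every $f\in C([0,1])$ and $n\ge1$, $$\|T_n(f)-A(f)\|\le M\big\{\|T_n(1)-A(1)\|\cdot\|A(f)\|+(\|T_n(1)A(1)\|+1)\,\omega(f,\mu_n)\big\}.$$ If moreover $T_n(1)=A(1)$, then $\|T_n(f)-A(f)\|\le M\big(\|A(1)^2\|+1\big)\,\omega(f,\mu_n)$.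
   Context: $C([0,1])$ is the space of continuous real functions on $[0,1]$ with pointwise order and sup norm $\|g\|=\sup_{x\in[0,1]}|g(x)|$; products are pointwise and $1=e_0$ is the constant function one. An operator $T:C([0,1])\to C([0,1])$ is weakly nonlinear if $T(f+g)\le T(f)+T(g)$ and $T(\alpha f)=\alpha T(f)$ for all $f,g$ and $\alpha\ge0$, and $T(f+\alpha\cdot1)=T(f)+\alpha T(1)$ for all $f$ and $\alpha\ge0$. $T$ is monotone if $f\le g$ implies $T(f)\le T(g)$. The modulus of continuity is $\omega(f,\delta)=\sup\{|f(x)-f(y)|:x,y\in[0,1],|x-y|\le\delta\}$ for $\delta>0$, with $\omega(f,0)=0$. *)

From Stdlib Require Import Reals Lra.
From Coquelicot Require Import Coquelicot.
Open Scope R_scope.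

(* Clamping R onto [0,1]: clamp x = max 0 (min 1 x). *)
Definition clamp (x : R) : R := (Rabs x - Rabs (x - 1) + 1) / 2.

Lemma clamp_in01 x : 0 <= x <= 1 -> clamp x = x.
Proof. intros H; unfold clamp; rewrite (Rabs_right x) by lra;
  rewrite (Rabs_left1 (x - 1)) by lra; lra. Qed.

Lemma clamp_range x : 0 <= clamp x <= 1.
Proof. unfold clamp; destruct (Rcase_abs x); destruct (Rcase_abs (x-1));
  [rewrite (Rabs_left x), (Rabs_left (x-1)) by lra
  |rewrite (Rabs_left x), (Rabs_right (x-1)) by lra
  |rewrite (Rabs_right x), (Rabs_left (x-1)) by lra
  |rewrite (Rabs_right x), (Rabs_right (x-1)) by lra]; lra. Qed.

Lemma clamp_idem x : clamp (clamp x) = clamp x.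
Proof. apply clamp_in01, clamp_range. Qed.

Lemma clamp_cont x : continuity_pt clamp x.
Proof.
  unfold clamp. apply continuity_pt_div; [|apply continuity_pt_const; intros ??; reflexivity|lra].
  apply continuity_pt_plus; [|apply continuity_pt_const; intros ??; reflexivity].
  apply continuity_pt_minus.
  - apply Rcontinuity_abs.
  - apply (continuity_pt_comp (fun x => x - 1) Rabs).
    + apply continuity_pt_minus; [apply derivable_continuous_pt, derivable_pt_id|
        apply continuity_pt_const; intros ??; reflexivity].
    + apply Rcontinuity_abs.
Qed.

(* C([0,1]): a continuous function on [0,1] is represented by its (unique)
   continuous extension to R that is constant outside [0,1], i.e. f = f o clamp. *)
Record C01 := mkC01 {
  fn :> R -> R;
  fn_cont : forall x, continuity_pt fn x;
  fn_clamp : forall x, fn x = fn (clamp x) }.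

Definition cst (c : R) : C01.
Proof. refine (mkC01 (fun _ => c) _ _); [intros; apply continuity_pt_const; intros ??; reflexivity | reflexivity]. Defined.

Definition one01 : C01 := cst 1.

Definition cadd (f g : C01) : C01.
Proof. refine (mkC01 (fun x => f x + g x) _ _).
  - intros; apply continuity_pt_plus; apply fn_cont.
  - intros; rewrite (fn_clamp f x), (fn_clamp g x); reflexivity. Defined.

Definition cmul (f g : C01) : C01.
Proof. refine (mkC01 (fun x => f x * g x) _ _).
  - intros; apply continuity_pt_mult; apply fn_cont.
  - intros; rewrite (fn_clamp f x), (fn_clamp g x); reflexivity. Defined.

Definition cscale (a : R) (f : C01) : C01 := cmul (cst a) f.
Definition copp (f : C01) : C01 := cscale (-1) f.
Definition csub (f g : C01) : C01 := cadd f (copp g).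

Definition e1 : C01.
Proof. refine (mkC01 clamp clamp_cont _). intros; now rewrite clamp_idem. Defined.
Definition e2 : C01 := cmul e1 e1.

Definition cle (f g : C01) : Prop := forall x, 0 <= x <= 1 -> f x <= g x.

Definition supnorm (f : C01) : R :=
  real (Lub_Rbar (fun y => exists x, 0 <= x <= 1 /\ y = Rabs (f x))).

Definition inf01 (f : C01) : R :=
  real (Glb_Rbar (fun y => exists x, 0 <= x <= 1 /\ y = f x)).

Definition modc (f : C01) (d : R) : R :=
  if Rle_dec d 0 then 0 else
  real (Lub_Rbar (fun y => exists x z, 0 <= x <= 1 /\ 0 <= z <= 1 /\
                     Rabs (x - z) <= d /\ y = Rabs (f x - f z))).

Definition weakly_nonlinear (T : C01 -> C01) : Prop :=
  (forall f g, cle (T (cadd f g)) (cadd (T f) (T g))) /\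
  (forall f a, 0 <= a -> T (cscale a f) = cscale a (T f)) /\
  (forall f a, 0 <= a -> T (cadd f (cscale a one01)) = cadd (T f) (cscale a (T one01))).

Definition monotone (T : C01 -> C01) : Prop :=
  forall f g, cle f g -> cle (T f) (T g).

(* Fix n, write S = T n and consider, pointwise on [0,1], the commutator
   D = S(f) A(1) - S(1) A(f) and the second moment
   E = S(e2) A(1) - 2 S(-e1) A(-e1) + S(1) A(e2), so that mu n = sqrt ||E||.
   1. For d > 0, |f t - f s| <= w(f,d) (1 + (t-s)^2/d^2), since the modulus of
      continuity is subadditive along chains of steps of length d
      ([modc_quadratic]); moreover w(f,d) -> 0 as d -> 0 ([modc_small]).
   2. For weakly nonlinear monotone P and Q, applying P to the parabolas
      dominating f given by 1., and then Q to the resulting parabola below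
      P(1) f, yields P(f) Q(1) - P(1) Q(f) <= w (P(1) Q(1) + E_{P,Q}/d^2)
      ([commutator_estimate]).  As E_{S,A} = E_{A,S} = E, this bounds |D|.
   3. Taking d = mu n, or letting d -> 0 when mu n = 0 ([bound_at_scale]),
      gives |D| <= w(f, mu n) (||S(1) A(1)|| + 1) ([commutator_bound]).
   4. Since S(f) - A(f) = (D + (S(1) - A(1)) A(f)) / A(1) and 1/A(1) <= M,
      the estimate follows; when S(1) = A(1) the first summand vanishes. *)

From Stdlib Require Import Reals Lra Psatz ProofIrrelevance FunctionalExtensionality.
From Coquelicot Require Import Coquelicot.
Open Scope R_scope.

Lemma C01_ext (f g : C01) : (forall x, 0 <= x <= 1 -> f x = g x) -> f = g.
Proof.
  destruct f as [f fc fcl], g as [g gc gcl]; simpl; intros Hfg.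
  assert (f = g) as <-.
  { apply functional_extensionality; intros x.
    rewrite (fcl x), (gcl x); apply Hfg, clamp_range. }
  f_equal; apply proof_irrelevance.
Qed.

Lemma csub_ev (f g : C01) x : csub f g x = f x - g x.
Proof. simpl; ring. Qed.

Lemma Lub_Rbar_finite (E : R -> Prop) (B y0 : R) :
  E y0 -> (forall y, E y -> y <= B) ->
  (forall y, E y -> y <= real (Lub_Rbar E)) /\
  (forall C, (forall y, E y -> y <= C) -> real (Lub_Rbar E) <= C).
Proof.
  intros Hy0 HB; generalize (Lub_Rbar_correct E).
  destruct (Lub_Rbar E) as [l| |]; intros [Hub Hlub]; simpl.
  - split; [exact Hub | exact Hlub].
  - exfalso; exact (Hlub B HB).
  - exfalso; exact (Hub y0 Hy0).
Qed.

Lemma Glb_Rbar_finite (E : R -> Prop) (B y0 : R) :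
  E y0 -> (forall y, E y -> B <= y) ->
  (forall y, E y -> real (Glb_Rbar E) <= y) /\
  (forall C, (forall y, E y -> C <= y) -> C <= real (Glb_Rbar E)).
Proof.
  intros Hy0 HB; generalize (Glb_Rbar_correct E).
  destruct (Glb_Rbar E) as [l| |]; intros [Hlb Hglb]; simpl.
  - split; [exact Hlb | exact Hglb].
  - exfalso; exact (Hlb y0 Hy0).
  - exfalso; exact (Hglb B HB).
Qed.

Lemma C01_bounded (g : C01) : exists B, forall x, 0 <= x <= 1 -> Rabs (g x) <= B.
Proof.
  destruct (continuity_ab_maj (fun x => Rabs (g x)) 0 1) as [xm [Hxm _]]; [lra | |].
  - intros c _; apply (continuity_pt_comp g Rabs); [apply fn_cont | apply Rcontinuity_abs].
  - exists (Rabs (g xm)); exact Hxm.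
Qed.

Lemma supnorm_spec (g : C01) :
  (forall x, 0 <= x <= 1 -> Rabs (g x) <= supnorm g) /\
  (forall B, (forall x, 0 <= x <= 1 -> Rabs (g x) <= B) -> supnorm g <= B).
Proof.
  destruct (C01_bounded g) as [B HB]; unfold supnorm.
  destruct (Lub_Rbar_finite (fun y => exists x, 0 <= x <= 1 /\ y = Rabs (g x)) B (Rabs (g 0)))
    as [Hub Hlub].
  - exists 0; split; [lra | reflexivity].
  - intros y [z [Hz ->]]; exact (HB z Hz).
  - split.
    + intros x Hx; apply Hub; exists x; split; [exact Hx | reflexivity].
    + intros C HC; apply Hlub; intros y [z [Hz ->]]; exact (HC z Hz).
Qed.

Lemma supnorm_ge (g : C01) x : 0 <= x <= 1 -> Rabs (g x) <= supnorm g.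
Proof. exact (proj1 (supnorm_spec g) x). Qed.

Lemma supnorm_le (g : C01) B :
  (forall x, 0 <= x <= 1 -> Rabs (g x) <= B) -> supnorm g <= B.
Proof. exact (proj2 (supnorm_spec g) B). Qed.

Lemma supnorm_nonneg (g : C01) : 0 <= supnorm g.
Proof. apply Rle_trans with (Rabs (g 0)); [apply Rabs_pos | apply supnorm_ge; lra]. Qed.

Lemma supnorm_csub_self (g : C01) : supnorm (csub g g) = 0.
Proof.
  apply Rle_antisym; [|apply supnorm_nonneg].
  apply supnorm_le; intros x _.
  rewrite csub_ev, Rminus_eq_0, Rabs_R0; lra.
Qed.

(* The infimum of a positive continuous function is attained, hence positive. *)
Lemma inf01_pos (g : C01) : (forall x, 0 <= x <= 1 -> 0 < g x) ->
  0 < inf01 g /\ forall x, 0 <= x <= 1 -> inf01 g <= g x.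
Proof.
  intros Hpos.
  destruct (continuity_ab_min g 0 1) as [xm [Hxm Hxm01]]; [lra | intros; apply fn_cont |].
  unfold inf01.
  destruct (Glb_Rbar_finite (fun y => exists x, 0 <= x <= 1 /\ y = g x) (g xm) (g 0))
    as [Hlb Hglb].
  - exists 0; split; [lra | reflexivity].
  - intros y [z [Hz ->]]; exact (Hxm z Hz).
  - split.
    + apply Rlt_le_trans with (g xm); [exact (Hpos xm Hxm01)|].
      apply Hglb; intros y [z [Hz ->]]; exact (Hxm z Hz).
    + intros x Hx; apply Hlb; exists x; split; [exact Hx | reflexivity].
Qed.

Lemma modc_spec (f : C01) d : 0 < d ->
  (forall x z, 0 <= x <= 1 -> 0 <= z <= 1 -> Rabs (x - z) <= d ->
     Rabs (f x - f z) <= modc f d) /\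
  (forall C, (forall x z, 0 <= x <= 1 -> 0 <= z <= 1 -> Rabs (x - z) <= d ->
     Rabs (f x - f z) <= C) -> modc f d <= C).
Proof.
  intros Hd; destruct (C01_bounded f) as [B HB].
  unfold modc; destruct (Rle_dec d 0) as [Hd0|_]; [lra|].
  destruct (Lub_Rbar_finite (fun y => exists x z, 0 <= x <= 1 /\ 0 <= z <= 1 /\
      Rabs (x - z) <= d /\ y = Rabs (f x - f z)) (B + B) 0) as [Hub Hlub].
  - exists 0, 0; rewrite !Rminus_eq_0, Rabs_R0; repeat split; lra.
  - intros y [x [z [Hx [Hz [_ ->]]]]].
    unfold Rminus; eapply Rle_trans; [apply Rabs_triang|]; rewrite Rabs_Ropp.
    generalize (HB x Hx) (HB z Hz); lra.
  - split.
    + intros x z Hx Hz Hxz; apply Hub; exists x, z; auto.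
    + intros C HC; apply Hlub; intros y [x [z [Hx [Hz [Hxz ->]]]]].
      exact (HC x z Hx Hz Hxz).
Qed.

Lemma modc_ge (f : C01) d x z : 0 < d -> 0 <= x <= 1 -> 0 <= z <= 1 ->
  Rabs (x - z) <= d -> Rabs (f x - f z) <= modc f d.
Proof. intros Hd; exact (proj1 (modc_spec f d Hd) x z). Qed.

Lemma modc_zero (f : C01) : modc f 0 = 0.
Proof. unfold modc; destruct (Rle_dec 0 0) as [_|H0]; [reflexivity | lra]. Qed.

Lemma modc_nonneg (f : C01) d : 0 <= modc f d.
Proof.
  destruct (Rle_lt_dec d 0) as [Hd|Hd].
  - unfold modc; destruct (Rle_dec d 0); [lra | contradiction].
  - apply Rle_trans with (Rabs (f 0 - f 0)); [apply Rabs_pos|].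
    apply modc_ge; [exact Hd | lra | lra |]; rewrite Rminus_eq_0, Rabs_R0; lra.
Qed.

(* Subadditivity of the modulus: points at distance at most N d are joined
   by at most N steps of length at most d. *)
Lemma modc_chain (f : C01) d (N : nat) t s : 0 < d -> 0 <= t <= 1 -> 0 <= s <= 1 ->
  Rabs (t - s) <= INR N * d -> Rabs (f t - f s) <= modc f d * (1 + Rabs (t - s) / d).
Proof.
  intros Hd; revert t s; induction N as [|N IH]; intros t s Ht Hs Hts;
    (destruct (Rle_dec (Rabs (t - s)) d) as [Hshort|Hlong];
     [ apply Rle_trans with (modc f d); [apply modc_ge; assumption|];
       assert (0 <= Rabs (t - s) / d) by (apply Rdiv_le_0_compat; [apply Rabs_pos | lra]);
       generalize (modc_nonneg f d); nra
     | ]).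
  - simpl in Hts; lra.
  - rewrite S_INR in Hts.
    assert (Hp : exists p, 0 <= p <= 1 /\ Rabs (p - s) = d /\ Rabs (t - p) = Rabs (t - s) - d).
    { destruct (Rcase_abs (t - s)) as [Hneg|Hpos].
      - rewrite Rabs_left in * by lra; exists (s - d).
        rewrite Rabs_left, Rabs_left by lra; repeat split; lra.
      - rewrite Rabs_right in * by lra; exists (s + d).
        rewrite Rabs_right, Rabs_right by lra; repeat split; lra. }
    destruct Hp as [p [Hp [Hps Htp]]].
    assert (Hfar : Rabs (f t - f p) <= modc f d * (1 + (Rabs (t - s) - d) / d))
      by (rewrite <- Htp; apply IH; [exact Ht | exact Hp | lra]).
    assert (Hnear : Rabs (f p - f s) <= modc f d) by (apply modc_ge; [exact Hd | exact Hp | exact Hs | lra]).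
    replace (f t - f s) with ((f t - f p) + (f p - f s)) by ring.
    eapply Rle_trans; [apply Rabs_triang|].
    replace (modc f d * (1 + Rabs (t - s) / d))
      with (modc f d * (1 + (Rabs (t - s) - d) / d) + modc f d) by (field; lra).
    lra.
Qed.

Lemma modc_quadratic (f : C01) d t s : 0 < d -> 0 <= t <= 1 -> 0 <= s <= 1 ->
  Rabs (f t - f s) <= modc f d * (1 + (t - s) ^ 2 / d ^ 2).
Proof.
  intros Hd Ht Hs.
  assert (Hq : 0 <= (t - s) ^ 2 / d ^ 2)
    by (apply Rdiv_le_0_compat; [apply pow2_ge_0 | apply pow_lt; exact Hd]).
  generalize (modc_nonneg f d); intros Hw.
  destruct (Rle_dec (Rabs (t - s)) d) as [Hshort|Hlong].
  - apply Rle_trans with (modc f d); [apply modc_ge; assumption | nra].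
  - destruct (archimed_cor1 d Hd) as [N [HN HN0]].
    assert (HN1 : 1 <= INR N * d).
    { assert (HNpos : 0 < INR N) by (apply lt_0_INR; exact HN0).
      rewrite <- (Rinv_r (INR N)) by lra.
      apply Rmult_le_compat_l; lra. }
    eapply Rle_trans; [apply (modc_chain f d N); try assumption; apply Rabs_le; lra|].
    apply Rmult_le_compat_l; [exact Hw|].
    assert (Hr : 1 <= Rabs (t - s) / d)
      by (apply Rmult_le_reg_r with d; [lra | unfold Rdiv; rewrite Rmult_assoc, Rinv_l; lra]).
    replace ((t - s) ^ 2 / d ^ 2) with ((Rabs (t - s) / d) * (Rabs (t - s) / d))
      by (rewrite <- (pow2_abs (t - s)); field; lra).
    nra.
Qed.

(* Uniform continuity on [0,1]: the modulus tends to 0 with d. *)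
Lemma modc_small (f : C01) eps : 0 < eps -> exists d, 0 < d /\ modc f d <= eps.
Proof.
  intros Heps.
  destruct (Heine f (fun c => 0 <= c <= 1) (compact_P3 0 1)) with (mkposreal eps Heps)
    as [del Hdel]; [intros; apply fn_cont|].
  assert (Hd : 0 < del / 2) by (generalize (cond_pos del); lra).
  exists (del / 2); split; [exact Hd|].
  apply (proj2 (modc_spec f _ Hd)); intros x z Hx Hz Hxz.
  left; apply (Hdel x z Hx Hz); generalize (cond_pos del); lra.
Qed.

Section WeaklyNonlinearOperators.
Variable P : C01 -> C01.
Hypothesis HPw : weakly_nonlinear P.
Hypothesis HPm : monotone P.

Lemma op_scale a g x : 0 <= a -> P (cscale a g) x = a * P g x.
Proof. intros Ha; destruct HPw as [_ [Hhom _]]; rewrite Hhom by exact Ha; reflexivity. Qed.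

Lemma op_subadd f g x : 0 <= x <= 1 -> P (cadd f g) x <= P f x + P g x.
Proof. intros Hx; destruct HPw as [Hsub _]; exact (Hsub f g x Hx). Qed.

Lemma op_zero g x : P (cscale 0 g) x = 0.
Proof. rewrite op_scale by lra; ring. Qed.

Lemma op_translate g c x : P (cadd g (cscale c one01)) x = P g x + c * P one01 x.
Proof.
  destruct HPw as [_ [_ Htr]]; destruct (Rle_dec 0 c) as [Hc|Hc].
  - rewrite Htr by exact Hc; reflexivity.
  - set (h := cadd g (cscale c one01)).
    assert (Hg : g = cadd h (cscale (- c) one01))
      by (apply C01_ext; intros y _; unfold h; simpl; ring).
    assert (HPg : P g x = P h x + - c * P one01 x)
      by (rewrite Hg at 1; rewrite Htr by lra; reflexivity).
    lra.
Qed.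

Lemma op_scale_lower a g x : 0 <= x <= 1 -> a * P g x <= P (cscale a g) x.
Proof.
  intros Hx; destruct (Rle_dec 0 a) as [Ha|Ha].
  - rewrite op_scale by exact Ha; lra.
  - assert (Hsplit : cscale 0 g = cadd (cscale a g) (cscale (- a) g))
      by (apply C01_ext; intros y _; simpl; ring).
    generalize (op_subadd (cscale a g) (cscale (- a) g) x Hx).
    rewrite <- Hsplit, op_zero, (op_scale (- a)) by lra; lra.
Qed.

(* Monotonicity and P(0) = 0 give P(1) >= 0. *)
Lemma op_one_nonneg x : 0 <= x <= 1 -> 0 <= P one01 x.
Proof.
  intros Hx; rewrite <- (op_zero one01 x); apply HPm; [|exact Hx].
  intros y _; simpl; lra.
Qed.

Lemma op_quadratic_majorant (g : C01) s c k x : 0 <= s -> 0 <= k -> 0 <= x <= 1 ->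
  (forall t, 0 <= t <= 1 -> g t <= c + k * (t * t - 2 * s * t)) ->
  P g x <= c * P one01 x + k * (P e2 x + 2 * s * P (copp e1) x).
Proof.
  intros Hs Hk Hx Hg.
  set (parabola := cadd e2 (cscale (2 * s) (copp e1))).
  assert (Hdom : P g x <= P (cadd (cscale k parabola) (cscale c one01)) x).
  { apply HPm; [|exact Hx]; intros t Ht; unfold parabola; simpl.
    rewrite clamp_in01 by exact Ht; specialize (Hg t Ht); nra. }
  rewrite op_translate, op_scale in Hdom by exact Hk.
  assert (Hpar : P parabola x <= P e2 x + 2 * s * P (copp e1) x)
    by (rewrite <- (op_scale (2 * s)) by lra; apply op_subadd; exact Hx).
  assert (k * P parabola x <= k * (P e2 x + 2 * s * P (copp e1) x))
    by (apply Rmult_le_compat_l; assumption).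
  lra.
Qed.

Lemma op_quadratic_minorant (g : C01) a b k C x : 0 <= b -> 0 <= k -> 0 <= x <= 1 ->
  (forall s, 0 <= s <= 1 -> C - k * (2 * a * s + b * (s * s)) <= g s) ->
  C * P one01 x + k * (2 * a * P (copp e1) x - b * P e2 x) <= P g x.
Proof.
  intros Hb Hk Hx Hg.
  set (parabola := cadd (cscale (2 * a) (copp e1)) (cscale (- b) e2)).
  assert (Hdom : P (cadd (cscale k parabola) (cscale C one01)) x <= P g x).
  { apply HPm; [|exact Hx]; intros s Hs; unfold parabola; simpl.
    rewrite clamp_in01 by exact Hs; specialize (Hg s Hs); nra. }
  rewrite op_translate, op_scale in Hdom by exact Hk.
  assert (Hpar : 2 * a * P (copp e1) x - b * P e2 x <= P parabola x).
  { assert (Hdecomp : cscale (2 * a) (copp e1) = cadd parabola (cscale b e2))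
      by (apply C01_ext; intros y _; unfold parabola; simpl; ring).
    generalize (op_scale_lower (2 * a) (copp e1) x Hx) (op_subadd parabola (cscale b e2) x Hx).
    rewrite <- Hdecomp, (op_scale b) by exact Hb; lra. }
  assert (k * (2 * a * P (copp e1) x - b * P e2 x) <= k * P parabola x)
    by (apply Rmult_le_compat_l; assumption).
  lra.
Qed.

End WeaklyNonlinearOperators.

(* One-sided commutator estimate: dominate f by the parabolas centred at each
   s, apply P, and apply Q to the resulting parabola lying below P(1)(x) f. *)
Lemma commutator_estimate (P Q : C01 -> C01) (f : C01) d w x :
  weakly_nonlinear P -> monotone P -> weakly_nonlinear Q -> monotone Q ->
  0 < d -> 0 <= w -> 0 <= x <= 1 ->
  (forall t s, 0 <= t <= 1 -> 0 <= s <= 1 ->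
     Rabs (f t - f s) <= w * (1 + (t - s) ^ 2 / d ^ 2)) ->
  P f x * Q one01 x - P one01 x * Q f x <=
    w * (P one01 x * Q one01 x) +
    w / d ^ 2 * (P e2 x * Q one01 x - 2 * (P (copp e1) x * Q (copp e1) x)
                 + P one01 x * Q e2 x).
Proof.
  intros HPw HPm HQw HQm Hd Hw Hx Hf.
  set (k := w / d ^ 2).
  assert (Hk : 0 <= k) by (apply Rdiv_le_0_compat; [exact Hw | apply pow_lt; exact Hd]).
  set (b := P one01 x).
  assert (Hb : 0 <= b) by exact (op_one_nonneg P HPw HPm x Hx).
  assert (Hmaj : forall s, 0 <= s <= 1 ->
      P f x <= (f s + w + k * (s * s)) * b + k * (P e2 x + 2 * s * P (copp e1) x)).
  { intros s Hs; apply (op_quadratic_majorant P HPw HPm); [lra | exact Hk | exact Hx |].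
    intros t Ht; specialize (Hf t s Ht Hs); apply Rabs_le_between in Hf.
    replace (w * (1 + (t - s) ^ 2 / d ^ 2)) with (w + k * (s * s) + k * (t * t - 2 * s * t))
      in Hf by (unfold k; field; lra).
    lra. }
  assert (Hmin := op_quadratic_minorant Q HQw HQm (cscale b f) (P (copp e1) x) b k
                    (P f x - w * b - k * P e2 x) x Hb Hk Hx).
  rewrite (op_scale Q HQw) in Hmin by exact Hb.
  assert (Hbf : forall s, 0 <= s <= 1 ->
      P f x - w * b - k * P e2 x - k * (2 * P (copp e1) x * s + b * (s * s)) <= cscale b f s)
    by (intros s Hs; specialize (Hmaj s Hs); simpl; nra).
  specialize (Hmin Hbf); nra.
Qed.

(* Exchanging the roles of S and A produces the same second-moment term, so
   the commutator is bounded in absolute value, for every scale d > 0. *)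
Lemma commutator_abs_bound (S A : C01 -> C01) (f : C01) d x :
  weakly_nonlinear S -> monotone S -> weakly_nonlinear A -> monotone A ->
  0 < d -> 0 <= x <= 1 ->
  Rabs (S f x * A one01 x - S one01 x * A f x) <=
    modc f d * (S one01 x * A one01 x) +
    modc f d / d ^ 2 * (S e2 x * A one01 x - 2 * (S (copp e1) x * A (copp e1) x)
                        + S one01 x * A e2 x).
Proof.
  intros HSw HSm HAw HAm Hd Hx.
  assert (Hf := fun t s => modc_quadratic f d t s Hd).
  generalize (commutator_estimate S A f d (modc f d) x HSw HSm HAw HAm Hd (modc_nonneg f d) Hx Hf)
             (commutator_estimate A S f d (modc f d) x HAw HAm HSw HSm Hd (modc_nonneg f d) Hx Hf).
  intros Hupper Hlower; apply Rabs_le; split; nra.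
Qed.

Lemma le_0_of_le_eps_mul X Y : 0 <= Y -> (forall eps, 0 < eps -> X <= eps * Y) -> X <= 0.
Proof.
  intros HY HX; destruct (Rle_dec X 0) as [Hle|Hgt]; [exact Hle | exfalso].
  assert (Heps : 0 < X / (Y + 1)) by (apply Rdiv_lt_0_compat; lra).
  specialize (HX _ Heps).
  assert (X / (Y + 1) * Y < X).
  { apply Rmult_lt_reg_r with (Y + 1); [lra|].
    unfold Rdiv; field_simplify; [nra | lra]. }
  lra.
Qed.

(* Choosing the scale d = mu: if X is controlled by w(f,d) (c + E/d^2) for
   every d > 0 and E <= mu^2, then |X| <= w(f,mu) (c + 1).  When mu = 0 this
   uses w(f,d) -> 0 as d -> 0. *)
Lemma bound_at_scale (f : C01) X c E mu : 0 <= c -> 0 <= mu -> E <= mu ^ 2 ->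
  (forall d, 0 < d -> Rabs X <= modc f d * c + modc f d / d ^ 2 * E) ->
  Rabs X <= modc f mu * (c + 1).
Proof.
  intros Hc Hmu HE HX.
  destruct (Rle_lt_dec mu 0) as [Hmu0|Hmupos].
  - assert (mu = 0) as -> by lra.
    rewrite modc_zero, Rmult_0_l.
    apply (le_0_of_le_eps_mul _ c Hc); intros eps Heps.
    destruct (modc_small f eps Heps) as [d [Hd Hwd]].
    assert (Hk : 0 <= modc f d / d ^ 2)
      by (apply Rdiv_le_0_compat; [apply modc_nonneg | apply pow_lt; exact Hd]).
    specialize (HX d Hd); simpl in HE; nra.
  - specialize (HX mu Hmupos).
    assert (Hk : modc f mu / mu ^ 2 * E <= modc f mu).
    { apply Rle_trans with (modc f mu / mu ^ 2 * mu ^ 2).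
      - apply Rmult_le_compat_l; [|exact HE].
        apply Rdiv_le_0_compat; [apply modc_nonneg | apply pow_lt; exact Hmupos].
      - right; field; lra. }
    lra.
Qed.

(* From the commutator to the difference:
   s_f - a_f = ((s_f a_1 - s_1 a_f) + (s_1 - a_1) a_f) / a_1 with a_1 >= m > 0. *)
Lemma difference_from_commutator sf s1 af a1 m B N1 N2 :
  0 < m -> m <= a1 -> Rabs (sf * a1 - s1 * af) <= B ->
  Rabs (s1 - a1) <= N1 -> Rabs af <= N2 ->
  Rabs (sf - af) <= / m * (N1 * N2 + B).
Proof.
  intros Hm Hma1 HB HN1 HN2.
  replace (sf - af) with (((sf * a1 - s1 * af) + (s1 - a1) * af) * / a1) by (field; lra).
  rewrite Rabs_mult, (Rabs_pos_eq (/ a1)) by (left; apply Rinv_0_lt_compat; lra).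
  rewrite Rmult_comm; apply Rmult_le_compat.
  - left; apply Rinv_0_lt_compat; lra.
  - apply Rabs_pos.
  - apply Rinv_le_contravar; assumption.
  - eapply Rle_trans; [apply Rabs_triang|]; rewrite Rabs_mult.
    assert (Rabs (s1 - a1) * Rabs af <= N1 * N2)
      by (apply Rmult_le_compat; [apply Rabs_pos | apply Rabs_pos | exact HN1 | exact HN2]).
    lra.
Qed.

Definition second_moment (S A : C01 -> C01) : C01 :=
  cadd (csub (cmul (S e2) (A one01)) (cscale 2 (cmul (S (copp e1)) (A (copp e1)))))
       (cmul (S one01) (A e2)).

Lemma commutator_bound (S A : C01 -> C01) (f : C01) x :
  weakly_nonlinear S -> monotone S -> weakly_nonlinear A -> monotone A -> 0 <= x <= 1 ->
  Rabs (S f x * A one01 x - S one01 x * A f x)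
    <= modc f (sqrt (supnorm (second_moment S A))) * (supnorm (cmul (S one01) (A one01)) + 1).
Proof.
  intros HSw HSm HAw HAm Hx.
  set (mu := sqrt (supnorm (second_moment S A))).
  assert (HE : second_moment S A x <= mu ^ 2).
  { unfold mu; rewrite pow2_sqrt by apply supnorm_nonneg.
    eapply Rle_trans; [apply Rle_abs | apply supnorm_ge; exact Hx]. }
  cbn [fn second_moment cadd csub cmul cscale copp cst] in HE.
  eapply Rle_trans.
  - apply (bound_at_scale f _ (S one01 x * A one01 x)
             (S e2 x * A one01 x - 2 * (S (copp e1) x * A (copp e1) x) + S one01 x * A e2 x) mu).
    + apply Rmult_le_pos; [exact (op_one_nonneg S HSw HSm x Hx) | exact (op_one_nonneg A HAw HAm x Hx)].
    + apply sqrt_pos.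
    + lra.
    + intros d Hd; exact (commutator_abs_bound S A f d x HSw HSm HAw HAm Hd Hx).
  - apply Rmult_le_compat_l; [apply modc_nonneg|].
    apply Rplus_le_compat_r; eapply Rle_trans; [apply Rle_abs|].
    exact (supnorm_ge (cmul (S one01) (A one01)) x Hx).
Qed.

Theorem corollary1 (A : C01 -> C01) (T : nat -> C01 -> C01) :
  weakly_nonlinear A -> monotone A ->
  (forall x, 0 <= x <= 1 -> 0 < A one01 x) ->
  (forall n, (1 <= n)%nat -> weakly_nonlinear (T n) /\ monotone (T n)) ->
  let M := / inf01 (A one01) in
  let mu := fun n : nat =>
    sqrt (supnorm (cadd (csub (cmul (T n e2) (A one01))
                           (cscale 2 (cmul (T n (copp e1)) (A (copp e1)))))
                     (cmul (T n one01) (A e2)))) in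
  forall (f : C01) (n : nat), (1 <= n)%nat ->
    supnorm (csub (T n f) (A f)) <=
      M * (supnorm (csub (T n one01) (A one01)) * supnorm (A f)
           + (supnorm (cmul (T n one01) (A one01)) + 1) * modc f (mu n))
    /\
    (T n one01 = A one01 ->
     supnorm (csub (T n f) (A f)) <= M * (supnorm (cmul (A one01) (A one01)) + 1) * modc f (mu n)).
Proof.
  intros HAw HAm HApos HT M mu f n Hn.
  destruct (HT n Hn) as [HSw HSm].
  destruct (inf01_pos (A one01) HApos) as [Hinf Hinf_le].
  assert (Hmain : supnorm (csub (T n f) (A f)) <=
      M * (supnorm (csub (T n one01) (A one01)) * supnorm (A f)
           + (supnorm (cmul (T n one01) (A one01)) + 1) * modc f (mu n))).
  { apply supnorm_le; intros x Hx.
    rewrite csub_ev, (Rmult_comm (_ + 1)).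
    apply (difference_from_commutator _ (T n one01 x) _ (A one01 x)); auto.
    - exact (commutator_bound (T n) A f x HSw HSm HAw HAm Hx).
    - rewrite <- csub_ev; exact (supnorm_ge (csub (T n one01) (A one01)) x Hx).
    - exact (supnorm_ge (A f) x Hx). }
  split; [exact Hmain|].
  intros Hone; rewrite Hone, supnorm_csub_self in Hmain.
  rewrite Rmult_assoc; lra.
Qed.
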